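(* For the intercept model, with $\hat{B} = G_{21}G_{11}^{-1}$ and $\hat{\alpha} = (-\hat{B}, I_r)\bar{\mathbf{x}}$, the ordinary least squares estimator of the matrix of mean vectors $$ \hat{U}_1(\hat{\alpha},\hat{B}) = \left(I_p + \hat{B}'\hat{B}\right)^{-1}\left(I_p, \hat{B}'\right)\left(X - \begin{pmatrix}\mathbf{0}\\ \hat{\alpha}\mathbf{1}_n'\end{pmatrix}\right) $$ equals $$ \hat{U}_1(\hat{\alpha},\hat{B}) = n^{-1} X_1\mathbf{1}_n\mathbf{1}_n' + \left(G_{11}G_{11}'X_1 + G_{11}G_{21}'X_2\right)C_n, $$ and in particular differs from the expression $\left(G_{11}G_{11}'X_1 + G_{11}G_{21}'X_2\right)C_n$ by the additional term $n^{-1}X_1\mathbf{1}_n\mathbf{1}_n'$.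
   Context: Multivariate errors-in-variables model: observed $X = (X_1', X_2')'$ where $X_1$ is $p\times n$ and $X_2$ is $r\times n$ (columns $\mathbf{x}_{1i}$, $\mathbf{x}_{2i}$, $i=1,\dots,n$), with $X = U + E$, $U = (U_1', U_2')'$, $U_2 = \alpha\mathbf{1}_n' + BU_1$, where $U_1$ ($p\times n$) is the matrix of unknown mean vectors, $B$ is $r\times p$, $\alpha$ is an $r$-vector, $\mathbf{1}_n$ is the $n$-vector of ones, and the columns of $E$ are i.i.d. with mean $\mathbf{0}$ and covariance $\sigma^2 I_{p+r}$. In the intercept model ($\alpha$ unknown), $C_n = I_n - n^{-1}\mathbf{1}_n\mathbf{1}_n'$. Let $W = XC_nX'$ with eigen-decomposition $W = GDG'$, $D$ diagonal with ordered eigenvalues and $G$ a $(p+r)\times(p+r)$ orthogonal matrix partitioned as $G = \begin{pmatrix} G_{11} & G_{12}\\ G_{21} & G_{22}\end{pmatrix}$ with $G_{11}$ of size $p\times p$ (assumed invertible). Let $\bar{\mathbf{x}} = n^{-1}X\mathbf{1}_n$. *)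

From HB Require Import structures.
From mathcomp Require Import all_boot all_order all_algebra.
Set Implicit Arguments. Unset Strict Implicit. Unset Printing Implicit Defensive.
Import Order.TTheory GRing.Theory Num.Theory.
Local Open Scope ring_scope.

Definition ones (R : nzRingType) (n : nat) : 'cV[R]_n := const_mx 1.

Definition centering (R : fieldType) (n : nat) : 'M[R]_n :=
  1%:M - (n%:R)^-1 *: (ones R n *m (ones R n)^T).

Definition orthogonal_mx (R : nzRingType) (m : nat) (G : 'M[R]_m) : Prop :=
  G *m G^T = 1%:M /\ G^T *m G = 1%:M.

Definition xbar (R : fieldType) (m n : nat) (X : 'M[R]_(m, n)) : 'cV[R]_m :=
  (n%:R)^-1 *: (X *m ones R n).

Definition Bhat (R : fieldType) (p r : nat) (G11 : 'M[R]_p) (G21 : 'M[R]_(r, p))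
  : 'M[R]_(r, p) := G21 *m invmx G11.

Definition alphahat (R : fieldType) (p r n : nat) (B : 'M[R]_(r, p))
  (X : 'M[R]_(p + r, n)) : 'cV[R]_r :=
  row_mx (- B) 1%:M *m xbar X.

Definition U1hat (R : fieldType) (p r n : nat) (alpha : 'cV[R]_r)
  (B : 'M[R]_(r, p)) (X : 'M[R]_(p + r, n)) : 'M[R]_(p, n) :=
  invmx (1%:M + B^T *m B) *m row_mx 1%:M B^T
    *m (X - col_mx (0 : 'M[R]_(p, n)) (alpha *m (ones R n)^T)).

From HB Require Import structures.
From mathcomp Require Import all_boot all_order all_algebra.
Import Order.TTheory GRing.Theory Num.Theory.
Set Implicit Arguments.
Unset Strict Implicit.
Unset Printing Implicit Defensive.
Local Open Scope ring_scope.

(* Writing P := n^-1 1_n 1_n' and S := I_p + B'B, one has alphahat 1_n' = (X2 - B X1) P, so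
   U1hat = S^-1 (X1 + B'X2) - S^-1 B'(X2 - B X1) P; adding and subtracting S^-1 (X1 + B'X2) P
   leaves S^-1 (X1 + B'X2) C_n + S^-1 S X1 P, which is the claimed decomposition for any B
   with S invertible.  For B = G21 G11^-1 the first column block of the orthogonal G gives
   G11'G11 + G21'G21 = I, whence S^-1 = G11 G11' and G11 G11' B' = G11 G21'. *)

Lemma mulmx_centering (R : fieldType) (m n : nat) (M : 'M[R]_(m, n)) :
  M *m centering R n = M - n%:R^-1 *: (M *m (ones R n *m (ones R n)^T)).
Proof. by rewrite /centering mulmxBr mulmx1 -scalemxAr. Qed.

Lemma alphahat_mul_ones (R : fieldType) (p r n : nat) (B : 'M[R]_(r, p))
    (X1 : 'M[R]_(p, n)) (X2 : 'M[R]_(r, n)) :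
  alphahat B (col_mx X1 X2) *m (ones R n)^T
    = n%:R^-1 *: ((X2 - B *m X1) *m (ones R n *m (ones R n)^T)).
Proof.
rewrite /alphahat /xbar -scalemxAr -scalemxAl mulmxA mulmxA.
by rewrite mul_row_col mul1mx mulNmx addrC.
Qed.

Lemma U1hat_col_mx (R : fieldType) (p r n : nat) (alpha : 'cV[R]_r)
    (B : 'M[R]_(r, p)) (X1 : 'M[R]_(p, n)) (X2 : 'M[R]_(r, n)) :
  U1hat alpha B (col_mx X1 X2)
    = invmx (1%:M + B^T *m B) *m (X1 + B^T *m (X2 - alpha *m (ones R n)^T)).
Proof.
by rewrite /U1hat opp_col_mx add_col_mx oppr0 addr0 -mulmxA mul_row_col mul1mx.
Qed.

Lemma U1hat_alphahat (R : fieldType) (p r n : nat) (B : 'M[R]_(r, p))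
    (X1 : 'M[R]_(p, n)) (X2 : 'M[R]_(r, n)) :
  1%:M + B^T *m B \in unitmx ->
  let X := col_mx X1 X2 in
  U1hat (alphahat B X) B X
    = n%:R^-1 *: (X1 *m (ones R n *m (ones R n)^T))
      + invmx (1%:M + B^T *m B) *m (X1 + B^T *m X2) *m centering R n.
Proof.
move=> unitS X; rewrite U1hat_col_mx alphahat_mul_ones mulmx_centering.
set J := ones R n *m (ones R n)^T; set c := n%:R^-1.
rewrite -[c *: (X1 *m J)](mulKmx unitS).
rewrite [c *: (invmx _ *m _ *m J)]scalemxAr -[_ *m _ *m (c *: J)]mulmxA.
rewrite -mulmxBr -mulmxDr; congr (_ *m _).
clearbody J; rewrite !scalemxAr; set P := c *: J.
rewrite !(mulmxBr, mulmxDl, mulmxBl, mulmxDr, mulmxN, mulNmx) mul1mx !mulmxA.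
by rewrite [RHS]addrCA [_ + B^T *m B *m X1 *m P]addrC addrKA opprB addrA.
Qed.

Lemma invmx_left (R : comUnitRingType) (m : nat) (A B : 'M[R]_m) :
  A *m B = 1%:M -> invmx B = A.
Proof.
move=> AB1; have [_ unitB] := mulmx1_unit AB1.
by rewrite -[LHS]mul1mx -AB1 mulmxK.
Qed.

Lemma orthogonal_mx_block_col (R : nzRingType) (p r : nat) (G11 : 'M[R]_p)
    (G12 : 'M[R]_(p, r)) (G21 : 'M[R]_(r, p)) (G22 : 'M[R]_r) :
  orthogonal_mx (block_mx G11 G12 G21 G22) ->
  G11^T *m G11 + G21^T *m G21 = 1%:M.
Proof.
case=> _; rewrite tr_block_mx mulmx_block (scalar_mx_block p r).
by case/eq_block_mx.
Qed.

Lemma mulmx_trmx_Bhat (R : fieldType) (p r : nat) (G11 : 'M[R]_p)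
    (G21 : 'M[R]_(r, p)) :
  G11 \in unitmx -> G11^T *m (Bhat G11 G21)^T = G21^T.
Proof.
by move=> unitG11; rewrite /Bhat trmx_mul mulmxA -trmx_mul mulVmx // trmx1 mul1mx.
Qed.

Lemma Bhat_gram_mul (R : fieldType) (p r : nat) (G11 : 'M[R]_p)
    (G21 : 'M[R]_(r, p)) :
  G11 \in unitmx -> G11^T *m G11 + G21^T *m G21 = 1%:M ->
  let B := Bhat G11 G21 in G11 *m G11^T *m (1%:M + B^T *m B) = 1%:M.
Proof.
move=> unitG11 colG B.
rewrite mulmxDr mulmx1 mulmxA -(mulmxA G11) mulmx_trmx_Bhat //.
rewrite -{1}[G11 *m G11^T](mulmxK unitG11) /B /Bhat !mulmxA -mulmxDl.
by rewrite -!mulmxA -mulmxDr colG mulmx1 mulmxV.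
Qed.

Theorem mainTheorem1 (R : realFieldType) (p r n : nat)
  (X1 : 'M[R]_(p, n)) (X2 : 'M[R]_(r, n))
  (G11 : 'M[R]_p) (G12 : 'M[R]_(p, r)) (G21 : 'M[R]_(r, p)) (G22 : 'M[R]_r)
  (D : 'M[R]_(p + r)) :
  (0 < n)%N ->
  let X := col_mx X1 X2 in
  let G := block_mx G11 G12 G21 G22 in
  let W := X *m centering R n *m X^T in
  orthogonal_mx G ->
  is_diag_mx D ->
  (forall i j : 'I_(p + r), (i <= j)%N -> D j j <= D i i) ->
  W = G *m D *m G^T ->
  G11 \in unitmx ->
  let B := Bhat G11 G21 in
  let a := alphahat B X in
  U1hat a B X
    = (n%:R)^-1 *: (X1 *m ones R n *m (ones R n)^T)
      + (G11 *m G11^T *m X1 + G11 *m G21^T *m X2) *m centering R n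
  /\ U1hat a B X - (G11 *m G11^T *m X1 + G11 *m G21^T *m X2) *m centering R n
    = (n%:R)^-1 *: (X1 *m ones R n *m (ones R n)^T).
Proof.
move=> _ X G W orthoG _ _ _ unitG11 B a.
have gram := Bhat_gram_mul unitG11 (orthogonal_mx_block_col orthoG).
have [_ unitS] := mulmx1_unit gram.
have U1E : U1hat a B X
    = (n%:R)^-1 *: (X1 *m ones R n *m (ones R n)^T)
      + (G11 *m G11^T *m X1 + G11 *m G21^T *m X2) *m centering R n.
  rewrite U1hat_alphahat // (invmx_left gram) (mulmxDr (G11 *m G11^T)).
  by rewrite (mulmxA _ B^T) -(mulmxA G11 G11^T B^T) /B mulmx_trmx_Bhat // !mulmxA.
by split; rewrite U1E ?addrK.
Qed.
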